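(* Let $K$ and $L$ be $n$-element finite sets, $M=K\times L$, and let $u=(u_{kl})$ be a unitary matrix indexed by $K\times L$ all of whose entries are nonzero. Then every eigenspace of the Berezin transform $I_u$ on $F(M)$ is invariant under pointwise complex conjugation $f\mapsto\bar f$. In particular, for any eigenvalue $\theta$ of $I_u$ of multiplicity $k$, the $\theta$-eigenspace, regarded as a real vector space, is the direct sum of the $k$-dimensional real vector space of real-valued $\theta$-eigenfunctions and the $k$-dimensional real vector space of purely imaginary $\theta$-eigenfunctions.
   Context: For a finite set $J$, $F(J)$ denotes the space of complex-valued functions on $J$. For $f=(f_{kl})\in F(M)$, $C_uf$ and $D_uf$ are the operators on $F(K)$ with matrices $x_{kk'}=\sum_{l\in L}u_{kl}f_{kl}\bar u_{k'l}$ and $y_{kk'}=\sum_{l\in L}u_{kl}f_{k'l}\bar u_{k'l}$ respectively; these maps $F(M)\to\operatorname{End}F(K)$ are linear bijections. The Berezin transform is $I_u:=C_u^{-1}D_u:F(M)\to F(M)$; explicitly $(I_uf)_{kl}=\sum_{k'\in K,l'\in L}\frac{u_{kl'}u_{k'l}}{u_{kl}u_{k'l'}}f_{k'l'}|u_{k'l'}|^2$. It is unitary with respect to $\langle f,g\rangle_u=\sum_{k,l}f_{kl}\bar g_{kl}|u_{kl}|^2$. *)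

From HB Require Import structures.
From mathcomp Require Import all_boot all_order all_algebra.
Set Implicit Arguments. Unset Strict Implicit. Unset Printing Implicit Defensive.
Import Order.TTheory GRing.Theory Num.Theory.
Local Open Scope ring_scope.

(* Complex field: any numClosedFieldType C (e.g. complex R, algC); x^* is
   complex conjugation.  F(M) for M = K x L is {ffun K * L -> C^o}, a
   finite-dimensional C-vector space (vectType). *)
Notation Fun C K L := {ffun (K * L)%type -> (C^o)%type}.

Section Defs.
Variables (C : numClosedFieldType) (K L : finType).

Definition unitary (u : K -> L -> C) : Prop :=
  (forall k k' : K, \sum_(l : L) u k l * (u k' l)^* = (k == k')%:R) /\
  (forall l l' : L, \sum_(k : K) (u k l)^* * u k l' = (l == l')%:R).

Definition berezin (u : K -> L -> C) (f : Fun C K L) : Fun C K L :=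
  [ffun kl : (K * L)%type =>
     \sum_(k' : K) \sum_(l' : L)
        (u kl.1 l' * u k' kl.2) / (u kl.1 kl.2 * u k' l')
        * f (k', l') * (u k' l' * (u k' l')^*)].

Definition conjf (f : Fun C K L) : Fun C K L := [ffun kl => (f kl)^*].

Definition real_valued (f : Fun C K L) : Prop := forall kl, (f kl)^* = f kl.
Definition imag_valued (f : Fun C K L) : Prop := forall kl, (f kl)^* = - f kl.

Definition berezin_eigenspace (u : K -> L -> C) (theta : C) : {vspace Fun C K L} :=
  lker (linfun (fun f : Fun C K L => berezin u f - theta *: f)).

End Defs.

(* The operator [conjf \o berezin u] is an involution; this is where unitarity of u
   enters, through the orthogonality of its rows and of its columns.  Moreover
   [berezin u] is symmetric for the bilinear form sum_x f x g x |u_x|^2.  If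
   I_u f = theta f, the involution gives conj f = theta^* I_u (conj f); pairing with f
   and using symmetry yields theta^* theta = 1, hence I_u (conj f) = theta conj f.
   A conjugation-closed subspace E has a basis of real-valued functions: if a vector
   of E lies outside a subspace, so does its real or its imaginary part, which is
   again in E.  Real-valued functions of E are exactly the real combinations of that basis,
   and multiplication by i carries them onto the purely imaginary ones. *)

From HB Require Import structures.
From mathcomp Require Import all_boot all_order all_algebra ring.
Set Implicit Arguments. Unset Strict Implicit. Unset Printing Implicit Defensive.
Import Order.TTheory GRing.Theory Num.Theory.
Local Open Scope ring_scope.

Section ConjugateFunctions.
Variables (C : numClosedFieldType) (K L : finType).
Implicit Types (f g : Fun C K L).

Lemma scalefE a f x : (a *: f) x = a * f x.
Proof. by rewrite ffunE. Qed.

Lemma conjfK : involutive (@conjf C K L).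
Proof. by move=> f; apply/ffunP=> x; rewrite !ffunE conjCK. Qed.

Lemma conjfZ a f : conjf (a *: f) = a^* *: conjf f.
Proof. by apply/ffunP=> x; rewrite !ffunE rmorphM. Qed.

Lemma conjf_sum n (c : 'I_n -> C) (g : 'I_n -> Fun C K L) :
  conjf (\sum_i c i *: g i) = \sum_i (c i)^* *: conjf (g i).
Proof.
apply/ffunP=> x; rewrite ffunE !sum_ffunE rmorph_sum; apply: eq_bigr => i _.
by rewrite !ffunE rmorphM.
Qed.

Definition real_part f : Fun C K L := 2^-1 *: (f + conjf f).
Definition imag_part f : Fun C K L := (- 'i / 2) *: (f - conjf f).

Lemma real_part_real f : real_valued (real_part f).
Proof. by move=> x; rewrite !ffunE rmorphM rmorphD /= conjCK fmorphV rmorph_nat addrC. Qed.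

Lemma imag_part_real f : real_valued (imag_part f).
Proof.
move=> x; rewrite !(scalefE, ffunE) !rmorphM rmorphN rmorphB /=.
by rewrite conjCK fmorphV rmorph_nat conjCi; ring.
Qed.

Lemma real_imag_partE f : f = real_part f + 'i *: imag_part f.
Proof.
apply/ffunP=> x; rewrite !(scalefE, ffunE).
have i2 : 'i * 'i = -1 :> C by rewrite -expr2 sqrCi.
by field: i2.
Qed.

Lemma imag_valuedZi g : real_valued g -> imag_valued ('i *: g).
Proof. by move=> g_real x; rewrite !(scalefE, ffunE) rmorphM /= conjCi g_real mulNr. Qed.

Lemma real_valuedZNi f : imag_valued f -> real_valued (- 'i *: f).
Proof.
by move=> f_imag x; rewrite !(scalefE, ffunE) rmorphM /= rmorphN /= conjCi opprK f_imag mulrN mulNr.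
Qed.

Lemma conjf_real f : real_valued f -> conjf f = f.
Proof. by move=> f_real; apply/ffunP=> x; rewrite ffunE f_real. Qed.

Lemma coord_real_valued n (X : n.-tuple (Fun C K L)) f i :
  free X -> {in X, forall v, real_valued v} -> f \in <<X>>%VS -> real_valued f ->
  coord X i f \is Num.real.
Proof.
move=> freeX X_real fX f_real; rewrite CrealE; apply/eqP.
have f_conj_coords : f = \sum_j (coord X j f)^* *: X`_j.
  rewrite -{1}(conjf_real f_real) {1}(coord_span fX) conjf_sum.
  apply: eq_bigr => j _; rewrite conjf_real //.
  by apply/X_real/mem_nth; rewrite size_tuple.
by rewrite {2}f_conj_coords coord_sum_free.
Qed.

Lemma real_imag_valued_eq0 f : real_valued f -> imag_valued f -> f = 0.
Proof.
move=> f_real f_imag; apply/ffunP=> x; rewrite ffunE.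
by have /eqP := f_imag x; rewrite f_real -addr_eq0 -mulr2n mulrn_eq0 => /eqP.
Qed.

End ConjugateFunctions.

Section BerezinTransform.
Variables (C : numClosedFieldType) (K L : finType) (u : K -> L -> C).
Implicit Types (f g : Fun C K L) (theta : C).

Lemma berezin_is_linear : linear (berezin u).
Proof.
move=> a f g; apply/ffunP=> x; rewrite !(scalefE, ffunE) mulr_sumr -big_split.
apply: eq_bigr => k _; rewrite mulr_sumr -big_split; apply: eq_bigr => l _.
by rewrite !(scalefE, ffunE) /=; ring.
Qed.

HB.instance Definition _ :=
  GRing.isLinear.Build C (Fun C K L) (Fun C K L) *:%R (berezin u) berezin_is_linear.

Definition berezin_shift theta f : Fun C K L := berezin u f - theta *: f.

Lemma berezin_shift_is_linear theta : linear (berezin_shift theta).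
Proof.
move=> a f g; rewrite /berezin_shift linearP scalerDr scalerA mulrC -scalerA.
by rewrite scalerBr addrACA opprD.
Qed.

HB.instance Definition _ theta :=
  GRing.isLinear.Build C (Fun C K L) (Fun C K L) *:%R (berezin_shift theta)
    (berezin_shift_is_linear theta).

Lemma mem_berezin_eigenspace theta f :
  (f \in berezin_eigenspace u theta) = (berezin u f == theta *: f).
Proof. by rewrite memv_ker (lfunE (berezin_shift theta)) subr_eq0. Qed.

Hypothesis u_neq0 : forall k l, u k l != 0.

Lemma berezin_kernelE f x :
  berezin u f x * u x.1 x.2 = \sum_y u y.1 x.2 * u x.1 y.2 * (u y.1 y.2)^* * f y.
Proof.
rewrite ffunE pair_bigA mulr_suml; apply: eq_bigr => -[k l] _ /=.
by field; rewrite !u_neq0.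
Qed.

(* [berezin_pairing f g] is [<f, conjf g>_u]; the bilinear form is more convenient
   here because [berezin u] is symmetric for it. *)
Definition berezin_pairing f g : C :=
  \sum_x f x * g x * (u x.1 x.2 * (u x.1 x.2)^*).

Lemma berezin_pairingZl a f g :
  berezin_pairing (a *: f) g = a * berezin_pairing f g.
Proof. by rewrite mulr_sumr; apply: eq_bigr => x _; rewrite scalefE !mulrA. Qed.

Lemma berezin_pairingZr a f g :
  berezin_pairing f (a *: g) = a * berezin_pairing f g.
Proof. by rewrite mulr_sumr; apply: eq_bigr => x _; rewrite scalefE; ring. Qed.

Lemma berezin_pairing_conjf_eq0 f : (berezin_pairing f (conjf f) == 0) = (f == 0).
Proof.
apply/eqP/eqP => [f0|->]; last by rewrite /berezin_pairing big1 // => x _; rewrite !ffunE !mul0r.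
have weight_ge0 x : 0 <= f x * conjf f x * (u x.1 x.2 * (u x.1 x.2)^*).
  by rewrite ffunE -!normCK mulr_ge0 ?exprn_ge0.
apply/ffunP=> x; have /eqP := psumr_eq0P (fun y _ => weight_ge0 y) f0 (i:=x) isT.
rewrite ffunE -!normCK mulf_eq0 !expf_eq0 /= !normr_eq0 (negPf (u_neq0 _ _)) orbF.
by move=> /eqP ->; rewrite ffunE.
Qed.

Lemma berezin_symmetric f g :
  berezin_pairing (berezin u f) g = berezin_pairing f (berezin u g).
Proof.
transitivity (\sum_x (berezin u f x * u x.1 x.2) * ((u x.1 x.2)^* * g x)).
  by apply: eq_bigr => x _; ring.
transitivity (\sum_x (berezin u g x * u x.1 x.2) * ((u x.1 x.2)^* * f x)); last first.
  by apply: eq_bigr => x _; ring.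
under eq_bigr => x _ do rewrite berezin_kernelE mulr_suml.
under [RHS]eq_bigr => x _ do rewrite berezin_kernelE mulr_suml.
by rewrite [RHS]exchange_big; apply: eq_bigr => x _; apply: eq_bigr => y _; ring.
Qed.

Hypothesis u_unitary : unitary u.

Lemma unitary_pair_delta x z :
  \sum_y (u x.1 y.2)^* * (u y.1 x.2)^* * (u y.1 z.2 * u z.1 y.2) = (z == x)%:R.
Proof.
case: x z => [k l] [k' l'] /=; have [rows cols] := u_unitary.
transitivity ((\sum_i (u i l)^* * u i l') * (\sum_j u k' j * (u k j)^*)).
  by rewrite big_distrlr pair_bigA; apply: eq_bigr => -[i j] _ /=; ring.
by rewrite rows cols -natrM mulnb xpair_eqE andbC [l == _]eq_sym.
Qed.

Lemma conjf_berezin_involutive : involutive (@conjf C K L \o berezin u).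
Proof.
move=> f; apply/ffunP=> x; rewrite /= ffunE.
have ux_neq0 : (u x.1 x.2)^* != 0 by rewrite conjC_eq0.
apply: (mulIf ux_neq0); rewrite -rmorphM berezin_kernelE rmorph_sum /=.
under eq_bigr => y _ do
  rewrite ffunE !rmorphM /= !conjCK -mulrA [_ * berezin _ _ _]mulrC berezin_kernelE mulr_sumr.
rewrite exchange_big /=.
under eq_bigr => z _.
  rewrite (eq_bigr (fun y => (u x.1 y.2)^* * (u y.1 x.2)^* * (u y.1 z.2 * u z.1 y.2)
                             * ((u z.1 z.2)^* * f z))); last by move=> y _; ring.
  rewrite -mulr_suml unitary_pair_delta.
  over.
rewrite (bigD1 x) //= eqxx mul1r big1 ?addr0; first by rewrite mulrC.
by move=> z /negPf ->; rewrite mul0r.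
Qed.

Lemma conjf_berezin_eigen theta f :
  berezin u f = theta *: f -> conjf f = theta^* *: berezin u (conjf f).
Proof.
by move=> ef; rewrite -{1}(conjf_berezin_involutive f) /= conjfK ef conjfZ linearZ.
Qed.

Lemma berezin_eigenvalue_unimodular theta f :
  f != 0 -> berezin u f = theta *: f -> theta^* * theta = 1.
Proof.
move=> f_neq0 ef.
have S_neq0 : berezin_pairing f (conjf f) != 0 by rewrite berezin_pairing_conjf_eq0.
apply: (mulIf S_neq0); rewrite mul1r -mulrA -berezin_pairingZl -ef berezin_symmetric.
by rewrite -berezin_pairingZr -(conjf_berezin_eigen ef).
Qed.

Lemma berezin_eigen_conjf theta f :
  berezin u f = theta *: f -> berezin u (conjf f) = theta *: conjf f.
Proof.
move=> ef; have [f0|f_neq0] := eqVneq f 0.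
  have -> : conjf f = 0 by apply/ffunP=> x; rewrite f0 !ffunE rmorph0.
  by rewrite linear0 scaler0.
rewrite [in RHS](conjf_berezin_eigen ef) scalerA mulrC.
by rewrite (berezin_eigenvalue_unimodular f_neq0 ef) scale1r.
Qed.

Lemma conjf_mem_berezin_eigenspace theta f :
  f \in berezin_eigenspace u theta -> conjf f \in berezin_eigenspace u theta.
Proof. by rewrite !mem_berezin_eigenspace => /eqP/berezin_eigen_conjf ->. Qed.

End BerezinTransform.

Section ConjugationClosedSubspace.
Variables (C : numClosedFieldType) (K L : finType) (E : {vspace Fun C K L}).
Hypothesis conjf_closed : forall f, f \in E -> conjf f \in E.

Lemma real_part_mem f : f \in E -> real_part f \in E.
Proof. by move=> fE; rewrite memvZ // memvD // conjf_closed. Qed.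

Lemma imag_part_mem f : f \in E -> imag_part f \in E.
Proof. by move=> fE; rewrite memvZ // memvB // conjf_closed. Qed.

Lemma real_imag_decomposition f : f \in E ->
  exists g h : Fun C K L,
    [/\ g \in E, real_valued g, h \in E, imag_valued h & f = g + h].
Proof.
move=> fE; exists (real_part f), ('i *: imag_part f); split.
- exact: real_part_mem.
- exact: real_part_real.
- by rewrite memvZ // imag_part_mem.
- exact/imag_valuedZi/imag_part_real.
- exact: real_imag_partE.
Qed.

Lemma exists_real_notin (U : {vspace Fun C K L}) :
  ~~ (E <= U)%VS -> exists w, [/\ w \in E, real_valued w & w \notin U].
Proof.
case/subvPn=> v vE vU.
have [reU|reU] := boolP (real_part v \in U); last first.
  by exists (real_part v); split=> //; [exact: real_part_mem | exact: real_part_real].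
have [imU|imU] := boolP (imag_part v \in U); last first.
  by exists (imag_part v); split=> //; [exact: imag_part_mem | exact: imag_part_real].
by case/negP: vU; rewrite (real_imag_partE v) memvD // memvZ.
Qed.

Lemma real_free_tuple m : (m <= \dim E)%N ->
  exists X : m.-tuple (Fun C K L),
    free X /\ {in X, forall v, v \in E /\ real_valued v}.
Proof.
elim: m => [|m IHm] m_lt; first by exists [tuple]; split; [exact: nil_free | move=> v].
have [X [freeX X_real]] := IHm (ltnW m_lt).
have [|w [wE w_real wX]] := @exists_real_notin <<X>>%VS.
  by apply/negP=> /dimvS; rewrite (eqnP freeX) size_tuple leqNgt m_lt.
exists [tuple of w :: X]; split; first by rewrite free_cons wX.
by move=> v; rewrite in_cons => /predU1P[->|/X_real].
Qed.

Lemma real_basis : exists X : (\dim E).-tuple (Fun C K L),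
  basis_of E X /\ {in X, forall v, v \in E /\ real_valued v}.
Proof.
have [X [freeX X_real]] := real_free_tuple (leqnn (\dim E)).
exists X; split=> //; rewrite basisEfree freeX size_tuple leqnn andbT.
by apply/span_subvP=> v /X_real[].
Qed.

Lemma real_valued_basis : exists g : 'I_(\dim E) -> Fun C K L,
  [/\ forall i, g i \in E /\ real_valued (g i),
      forall r : 'I_(\dim E) -> C, (forall i, r i \is Num.real) ->
        \sum_i r i *: g i = 0 -> forall i, r i = 0 &
      forall f, f \in E -> real_valued f ->
        exists2 r : 'I_(\dim E) -> C, (forall i, r i \is Num.real) &
          f = \sum_i r i *: g i].
Proof.
have [X [basisX X_real]] := real_basis.
have freeX := basis_free basisX.
exists (fun i => X`_i); split.
- by move=> i; apply/X_real/mem_nth; rewrite size_tuple.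
- by move=> r _; apply/freeP.
- move=> f fE f_real; have fX : f \in <<X>>%VS by rewrite (span_basis basisX).
  exists (fun i => coord X i f); last exact: coord_span.
  by move=> i; apply: coord_real_valued => // v /X_real[].
Qed.

Lemma imag_valued_basis : exists h : 'I_(\dim E) -> Fun C K L,
  [/\ forall i, h i \in E /\ imag_valued (h i),
      forall r : 'I_(\dim E) -> C, (forall i, r i \is Num.real) ->
        \sum_i r i *: h i = 0 -> forall i, r i = 0 &
      forall f, f \in E -> imag_valued f ->
        exists2 r : 'I_(\dim E) -> C, (forall i, r i \is Num.real) &
          f = \sum_i r i *: h i].
Proof.
have [g [g_basis g_free g_span]] := real_valued_basis.
have sum_scaleri (r : 'I_(\dim E) -> C) :
    \sum_i r i *: ('i *: g i) = 'i *: \sum_i r i *: g i.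
  by rewrite scaler_sumr; apply: eq_bigr => i _; rewrite !scalerA mulrC.
exists (fun i => 'i *: g i); split.
- move=> i; have [gE g_real] := g_basis i.
  by split; [rewrite memvZ | exact: imag_valuedZi].
- move=> r r_real; rewrite sum_scaleri => /eqP; rewrite scaler_eq0 (negPf (neq0Ci C)).
  by move=> /eqP; apply: g_free.
- move=> f fE f_imag.
  have [r r_real ef] := g_span _ (memvZ (- 'i) fE) (real_valuedZNi f_imag).
  exists r => //.
  by rewrite sum_scaleri -ef scalerA mulrN -expr2 sqrCi opprK scale1r.
Qed.

End ConjugationClosedSubspace.

Theorem lemma2p4 (C : numClosedFieldType) (K L : finType) (n : nat)
  (HK : #|K| = n) (HL : #|L| = n)
  (u : K -> L -> C) (Hu : unitary u) (Hnz : forall k l, u k l != 0) :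
  (forall (theta : C) (f : Fun C K L),
      f \in berezin_eigenspace u theta -> conjf f \in berezin_eigenspace u theta) /\
  (forall (theta : C) (k : nat),
      k = \dim (berezin_eigenspace u theta) -> (0 < k)%N ->
      (forall f, f \in berezin_eigenspace u theta ->
         exists g h : Fun C K L,
           [/\ g \in berezin_eigenspace u theta, real_valued g,
               h \in berezin_eigenspace u theta, imag_valued h & f = g + h]) /\
      (forall f : Fun C K L, f \in berezin_eigenspace u theta ->
         real_valued f -> imag_valued f -> f = 0) /\
      (exists g : 'I_k -> Fun C K L,
         [/\ forall i, g i \in berezin_eigenspace u theta /\ real_valued (g i),
             forall r : 'I_k -> C, (forall i, r i \is Num.real) ->
               \sum_i r i *: g i = 0 -> forall i, r i = 0 &
             forall f, f \in berezin_eigenspace u theta -> real_valued f ->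
               exists2 r : 'I_k -> C, (forall i, r i \is Num.real) &
                 f = \sum_i r i *: g i]) /\
      (exists h : 'I_k -> Fun C K L,
         [/\ forall i, h i \in berezin_eigenspace u theta /\ imag_valued (h i),
             forall r : 'I_k -> C, (forall i, r i \is Num.real) ->
               \sum_i r i *: h i = 0 -> forall i, r i = 0 &
             forall f, f \in berezin_eigenspace u theta -> imag_valued f ->
               exists2 r : 'I_k -> C, (forall i, r i \is Num.real) &
                 f = \sum_i r i *: h i])).
Proof.
have E_closed theta := @conjf_mem_berezin_eigenspace C K L u Hnz Hu theta.
split=> // theta k -> _; have {}E_closed := E_closed theta.
split; first exact: real_imag_decomposition E_closed.
split; first by move=> f _; apply: real_imag_valued_eq0.
by split; [exact: real_valued_basis E_closed | exact: imag_valued_basis E_closed].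
Qed.
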